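(* Let $G$ be a weakly-reversible chemical reaction network and $U_G$ the network obtained by making every reaction reversible. Then $U_G$ and $G$ have the same siphons, and the same critical siphons.
   Context: A chemical reaction network (CRN) consists of positive integers $s,n$, a finite directed graph $G$ with vertex set $\{1,\dots,n\}$ and edge set $E(G)$, and an injective labeling of vertex $i$ by a monic monomial $\psi_i=\prod_{j=1}^s x_j^{y_{ij}}$, $y_i=(y_{i1},\dots,y_{is})$. $G$ is weakly-reversible iff each connected component is strongly connected. $U_G$ is the CRN with the same vertices and labeling and edge set $\{(i,j) : (i,j)\in E(G)\text{ or }(j,i)\in E(G)\}$. The stoichiometric subspace of a CRN is the span of $\{y_i-y_j:(i,j)\text{ an edge}\}$, and for $x\in\mathbb{R}^s_{\ge0}$ the invariant polyhedron containing $x$ is $(x+S)\cap\mathbb{R}^s_{\ge0}$. A nonempty $Z\subseteq\{1,\dots,s\}$ is a siphon iff for every edge $(i,j)$, if $x_k\mid\psi_j$ for some $k\in Z$ then $x_l\mid\psi_i$ for some $l\in Z$. A siphon $Z$ is critical iff there is $z\in\mathbb{R}^s_{\ge0}$ with $Z=\{i:z_i=0\}$ such that the invariant polyhedron containing $z$ meets $\mathbb{R}^s_{>0}$. *)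

From HB Require Import structures.
From mathcomp Require Import all_boot all_order all_algebra.
From mathcomp Require Import reals.
Set Implicit Arguments. Unset Strict Implicit. Unset Printing Implicit Defensive.
Import Order.TTheory GRing.Theory Num.Theory.
Local Open Scope ring_scope.

(* A CRN: species indexed by 'I_s, vertices ('complexes') indexed by 'I_n
   (standing for {1..n}), edges given by a relation E : rel 'I_n, and the label
   of vertex i is the monomial prod_k x_k^(y i k), encoded by its exponent
   vector y i : {ffun 'I_s -> nat}. *)

Definition weakly_reversible (n : nat) (E : rel 'I_n) : Prop :=
  forall i j : 'I_n, connect (fun a b => E a b || E b a) i j -> connect E i j.

Definition U_edges (n : nat) (E : rel 'I_n) : rel 'I_n :=
  fun i j => E i j || E j i.

(* x_k divides psi_i  iff  y i k >= 1. *)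
Definition divides_label (s n : nat) (y : 'I_n -> {ffun 'I_s -> nat})
  (k : 'I_s) (i : 'I_n) : bool := (0 < y i k)%N.

Definition siphon (s n : nat) (E : rel 'I_n) (y : 'I_n -> {ffun 'I_s -> nat})
  (Z : {set 'I_s}) : Prop :=
  Z != set0 /\
  forall i j : 'I_n, E i j ->
    (exists2 k, k \in Z & divides_label y k j) ->
    (exists2 l, l \in Z & divides_label y l i).

Definition in_stoich (R : realType) (s n : nat) (E : rel 'I_n)
  (y : 'I_n -> {ffun 'I_s -> nat}) (v : 'I_s -> R) : Prop :=
  exists c : 'I_n -> 'I_n -> R,
    forall k : 'I_s,
      v k = \sum_(i < n) \sum_(j < n | E i j) c i j * ((y i k)%:R - (y j k)%:R).

Definition critical_siphon (R : realType) (s n : nat) (E : rel 'I_n)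
  (y : 'I_n -> {ffun 'I_s -> nat}) (Z : {set 'I_s}) : Prop :=
  siphon E y Z /\
  exists z : 'I_s -> R,
    (forall k, 0 <= z k) /\ Z = [set k | z k == 0] /\
    (* the invariant polyhedron (z + S) ∩ R^s_{>=0} meets R^s_{>0} *)
    exists x : 'I_s -> R,
      (forall k, 0 < x k) /\ in_stoich E y (fun k => x k - z k).

(* Siphons: a reaction j <- i of U_G that is not in G reverses an edge i -> j
   of G; by weak reversibility G has a path from j back to i, and the siphon
   condition propagates backwards along that path.  Critical siphons: U_G and G
   even have the same stoichiometric subspace, because y_j - y_i is the
   negative of the generator y_i - y_j; hence their invariant polyhedra, and
   with them criticality, coincide. *)

From HB Require Import structures.
From mathcomp Require Import all_boot all_order all_algebra.
From mathcomp Require Import reals.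
Set Implicit Arguments. Unset Strict Implicit. Unset Printing Implicit Defensive.
Import Order.TTheory GRing.Theory Num.Theory.
Local Open Scope ring_scope.

Section StoichiometricSubspace.
Variables (R : realType) (s n : nat) (y : 'I_n -> {ffun 'I_s -> nat}).

Lemma in_stoich_subrel (E E' : rel 'I_n) (v : 'I_s -> R) :
  subrel E E' -> in_stoich E y v -> in_stoich E' y v.
Proof.
move=> sEE' [c Hc]; exists (fun i j => if E i j then c i j else 0) => k.
rewrite Hc; apply: eq_bigr => i _.
rewrite [RHS]big_mkcond [LHS]big_mkcond; apply: eq_bigr => j _.
case Eij: (E i j); first by rewrite (sEE' _ _ Eij).
by case: (E' i j); rewrite ?mul0r.
Qed.

Lemma in_stoich_U_edges (E : rel 'I_n) (v : 'I_s -> R) :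
  in_stoich (U_edges E) y v <-> in_stoich E y v.
Proof.
split; last by apply: in_stoich_subrel => i j Eij; rewrite /U_edges Eij.
move=> [c Hc].
(* a U-edge (i,j) that only reverses the G-edge (j,i) is charged to (j,i) with the opposite sign *)
exists (fun i j => c i j - (if E j i then 0 else c j i)) => k.
rewrite Hc.
set d := fun i j => ((y i k)%:R - (y j k)%:R : R).
pose A i j := if E i j then c i j * d i j else 0.
pose B i j := if E j i && ~~ E i j then c i j * d i j else 0.
have -> : \sum_(i < n) \sum_(j < n | U_edges E i j) c i j * d i j =
    \sum_(i < n) \sum_(j < n) A i j + \sum_(i < n) \sum_(j < n) B i j.
  rewrite -big_split; apply: eq_bigr => i _; rewrite big_mkcond -big_split.
  apply: eq_bigr => j _; rewrite /A /B /U_edges.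
  by case: (E i j); case: (E j i); rewrite /= ?addr0 ?add0r.
have -> : \sum_(i < n) \sum_(j < n | E i j)
      (c i j - (if E j i then 0 else c j i)) * d i j =
    \sum_(i < n) \sum_(j < n) A i j + \sum_(i < n) \sum_(j < n) B j i.
  rewrite -big_split; apply: eq_bigr => i _; rewrite big_mkcond -big_split.
  apply: eq_bigr => j _; rewrite /A /B /d.
  case: (E i j); case: (E j i); rewrite /= ?addr0 ?add0r ?subr0 //.
  by rewrite mulrBl; congr (_ + _); rewrite -mulrN opprB.
by rewrite [X in _ + X = _]exchange_big.
Qed.

End StoichiometricSubspace.

Section Siphons.
Variables (s n : nat) (y : 'I_n -> {ffun 'I_s -> nat}).

Lemma siphon_connect (E : rel 'I_n) (Z : {set 'I_s}) (i j : 'I_n) :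
  siphon E y Z -> connect E i j ->
  (exists2 k, k \in Z & divides_label y k j) ->
  (exists2 l, l \in Z & divides_label y l i).
Proof.
move=> [_ HZ] /connectP [p Hp ->] {j}.
elim: p i Hp => [|a p IH] i //= /andP [Eia Hp] Hlast.
exact: HZ _ _ Eia (IH _ Hp Hlast).
Qed.

Lemma siphon_U_edges (E : rel 'I_n) (Z : {set 'I_s}) :
  weakly_reversible E -> siphon (U_edges E) y Z <-> siphon E y Z.
Proof.
move=> wrE; split.
  by move=> [Z0 HZ]; split=> // i j Eij; apply: HZ; rewrite /U_edges Eij.
move=> sZ; split; first by case: sZ.
move=> i j /orP [Eij | Eji]; first by case: sZ => _; apply.
apply: (siphon_connect sZ); apply: wrE.
by apply: connect1; rewrite Eji orbT.
Qed.

Lemma critical_siphon_eq (R : realType) (E E' : rel 'I_n) (Z : {set 'I_s}) :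
  (siphon E y Z <-> siphon E' y Z) ->
  (forall v : 'I_s -> R, in_stoich E y v <-> in_stoich E' y v) ->
  critical_siphon R E y Z <-> critical_siphon R E' y Z.
Proof.
move=> eqS eqV.
by split=> -[/eqS sZ [z [z0 [defZ [x [x0 /eqV Sxz]]]]]];
  split=> //; exists z; do 2 split=> //; exists x.
Qed.

End Siphons.

Theorem lemma4p4 (R : realType) (s n : nat) (E : rel 'I_n)
  (y : 'I_n -> {ffun 'I_s -> nat}) :
  (0 < s)%N -> (0 < n)%N -> injective y ->
  weakly_reversible E ->
  (forall Z : {set 'I_s}, siphon (U_edges E) y Z <-> siphon E y Z) /\
  (forall Z : {set 'I_s},
      critical_siphon R (U_edges E) y Z <-> critical_siphon R E y Z).
Proof.
move=> _ _ _ wrE; split=> Z; first exact: siphon_U_edges.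
apply: critical_siphon_eq; first exact: siphon_U_edges.
exact: in_stoich_U_edges.
Qed.
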